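(* $\mathtt{RealTime_{IA}}\subseteq\mathtt{pred}$-$\mathtt{dio}$-$\mathtt{ESO}$-$\mathtt{HORN}$: for every iterative array $\mathcal A$ (sequential input, neighborhood $\{-1,0,1\}$, output on the first cell) there is a predecessor Horn formula with diagonal input-output $\Phi$ such that for all $w\in\Sigma^+$, $\mathcal A$ accepts $w$ in real time iff $\langle w\rangle\models\Phi$.
   Context: Fix a finite alphabet $\Sigma$. A nonempty word $w=w_1\cdots w_n$ is represented by the structure $\langle w\rangle=([1,n];(Q_s)_{s\in\Sigma},\mathtt{min},\mathtt{max},\mathtt{suc},\mathtt{pred})$ with $Q_s(i)\iff w_i=s$, $\mathtt{min}(i)\iff i=1$, $\mathtt{max}(i)\iff i=n$, $\mathtt{suc}(i)=\min(i+1,n)$, $\mathtt{pred}(i)=\max(i-1,1)$; $x-k$ denotes $\mathtt{pred}^k(x)$. A predecessor Horn formula with diagonal input-output is $\Phi=\exists\mathbf{R}\forall x\forall y\,\psi(x,y)$, $\mathbf{R}$ a finite set of binary relation symbols, $\psi$ a conjunction of Horn clauses in $x,y$ over $\{(Q_s)_{s\in\Sigma},\mathtt{min},\mathtt{max},\mathtt{suc},\mathtt{pred},=\}\cup\mathbf{R}$, each of the form $\delta_1\wedge\cdots\wedge\delta_r\to\delta_0$ with $\delta_0$ an atom $R(x,y)$ ($R\in\mathbf{R}$) or $\bot$, each hypothesis being one of: $Q_s(x-a)\wedge x=y$ ($s\in\Sigma$, $a\ge0$); $U(x-a)$, $\neg U(x-a)$, $U(y-a)$, $\neg U(y-a)$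 ($U\in\{\mathtt{min},\mathtt{max}\}$, $a\ge0$); $S(x-a,y-b)$ or $S(y-b,x-a)$ ($S\in\mathbf{R}$, $a,b\ge0$). $\mathtt{pred}$-$\mathtt{dio}$-$\mathtt{ESO}$-$\mathtt{HORN}$ is the class of languages $\{w\in\Sigma^+:\langle w\rangle\models\Phi\}$. An iterative array is a cellular automaton with finite state set $Q\supseteq\Sigma$, accepting states $Q_{accept}\subseteq Q$, neighborhood $\{-1,0,1\}$, transition function $\delta:Q^3\to Q$ and an input transition function $\delta_{input}$ for the first cell. On input $w=w_1\cdots w_n$ it uses cells $1,\dots,n$; cells outside are permanently in a state $\sharp$, cells not yet reached by information are in a quiescent state $\lambda$. The letter $w_i$ is given to cell 1 at time $i$ (state of cell 1 at time $i\le n$ computed by $\delta_{input}$ from $w_i$ and the previous neighbourhood states); other updates are $\langle c,t\rangle=\delta(\langle c-1,t-1\rangle,\langle c,t-1\rangle,\langle c+1,t-1\rangle)$. The array accepts $w$ in real time iff $\langle 1,n\rangle\in Q_{accept}$; $\mathtt{RealTime_{IA}}$ is the class of languages so accepted. *)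

From Stdlib Require Import List.
From mathcomp Require Import all_boot.
Set Implicit Arguments. Unset Strict Implicit. Unset Printing Implicit Defensive.

(* ===================== Words and positions =====================
   A nonempty word w = w_1 ... w_n (n = size w) has positions 1..n.
   Letter at position p is  onth w (p-1)  (onth is 0-indexed). *)

(* pred^a(p) = max(p - a, 1)  (x - a in the paper) *)
Definition predk (a p : nat) : nat := maxn (p - a) 1.

Record IA (Sigma : finType) := MkIA {
  ia_Q : finType;
  ia_accept : pred ia_Q;
  ia_sharp : ia_Q;
  ia_lambda : ia_Q;
  ia_delta : ia_Q -> ia_Q -> ia_Q -> ia_Q;          (* delta(left,self,right) *)
  ia_delta_in : Sigma -> ia_Q -> ia_Q -> ia_Q -> ia_Q;
      (* input transition of cell 1: letter, then (left,self,right) *)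
  ia_quiescent : ia_delta ia_lambda ia_lambda ia_lambda = ia_lambda
}.

Fixpoint ia_conf (Sigma : finType) (A : IA Sigma) (w : seq Sigma) (t : nat)
  : nat -> ia_Q A :=
  let n := size w in
  match t with
  | 0 => fun c => if (1 <= c <= n) then @ia_lambda Sigma A else @ia_sharp Sigma A
  | t'.+1 => fun c =>
      let prev := @ia_conf Sigma A w t' in
      if (1 <= c <= n) then
        match (if c == 1 then onth w t' else None) with
        | Some a => @ia_delta_in Sigma A a (prev c.-1) (prev c) (prev c.+1)
        | None => @ia_delta Sigma A (prev c.-1) (prev c) (prev c.+1)
        end
      else @ia_sharp Sigma A
  end.

Definition ia_accepts (Sigma : finType) (A : IA Sigma) (w : seq Sigma) : Prop :=
  @ia_accept Sigma A (ia_conf A w (size w) 1).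

(* ============ Predecessor Horn formulas with diagonal input-output ============
   Relation symbols of R are natural numbers (the finite set R is the set of
   symbols occurring in the formula). *)

Inductive var := VX | VY.
Inductive unpred := Pmin | Pmax.

Inductive hyp (Sigma : Type) :=
  | HLetter of Sigma & nat
      (* HLetter s a  :  Q_s(x-a) /\ x = y *)
  | HUn of bool & unpred & var & nat
      (* HUn b U v a  :  U(v-a) if b = true, ~ U(v-a) if b = false *)
  | HRel of nat & bool & nat & nat.
      (* HRel S true a b   :  S(x-a, y-b)
         HRel S false a b  :  S(y-b, x-a) *)

(* A Horn clause  delta_1 /\ ... /\ delta_r -> delta_0, where the conclusion
   is  Some R  for the atom R(x,y)  or  None  for bottom. *)
Record clause (Sigma : Type) := MkClause {
  cl_hyps : seq (hyp Sigma);
  cl_concl : option nat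
}.

(* Phi = exists R, forall x forall y, (conjunction of the clauses) *)
Definition formula (Sigma : Type) := seq (clause Sigma).

Section Semantics.
Variable Sigma : finType.
Variable w : seq Sigma.
Variable I : nat -> nat -> nat -> Prop.

Definition var_val (x y : nat) (v : var) : nat :=
  match v with VX => x | VY => y end.

Definition unpred_val (U : unpred) (p : nat) : Prop :=
  match U with Pmin => p = 1 | Pmax => p = size w end.

Definition hyp_holds (x y : nat) (h : hyp Sigma) : Prop :=
  match h with
  | HLetter s a => onth w (predk a x).-1 = Some s /\ x = y
  | HUn b U v a =>
      if b then unpred_val U (predk a (var_val x y v))
      else ~ unpred_val U (predk a (var_val x y v))
  | HRel r dir a b =>
      if dir then I r (predk a x) (predk b y)
      else I r (predk b y) (predk a x)
  end.

Definition clause_holds (x y : nat) (C : clause Sigma) : Prop :=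
  (forall h, In h (cl_hyps C) -> hyp_holds x y h) ->
  match cl_concl C with
  | Some r => I r x y
  | None => False
  end.

End Semantics.

Definition models (Sigma : finType) (w : seq Sigma) (Phi : formula Sigma) : Prop :=
  exists I : nat -> nat -> nat -> Prop,
    forall x y, 1 <= x <= size w -> 1 <= y <= size w ->
      forall C, In C Phi -> clause_holds w I x y C.

From Stdlib Require Import List.
From mathcomp Require Import all_boot zify.
Set Implicit Arguments. Unset Strict Implicit. Unset Printing Implicit Defensive.

(* The real-time space-time diagram of the array is read in coordinates
   (x, y), where y <= x: the point (x, y) stands for cell x - y + 1 at time y.
   Then the letter w_x and the state of cell 1 at time x both sit on the
   diagonal x = y, acceptance is read at (n, n), and every state depends only
   on the three states at (x-2, y-1), (x-1, y-1), (x, y-1).  One binary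
   relation per state, holding exactly where the diagram carries that state,
   is thus defined by predecessor Horn clauses, plus two auxiliary relations
   for x = y and y < x.  The intended relations satisfy the clauses, and any
   relations satisfying them contain the intended ones (induction on y), so a
   clause refuting a non-accepting state at (n, n) decides acceptance. *)

Lemma In_allP (T : Type) (P : T -> Prop) (l : list T) :
  (forall x, In x l -> P x) <-> foldr (fun x Q => P x /\ Q) True l.
Proof.
elim: l => [|a l IH] /=; first by split.
by rewrite -IH; split=> [H|[Pa H] x [<-|]]; auto.
Qed.

Lemma In_enum (T : finType) (x : T) : In x (enum T).
Proof.
have : x \in enum T by rewrite mem_enum.
by elim: (enum T) => //= a s IH; rewrite in_cons => /orP [/eqP ->|/IH]; auto.
Qed.

Lemma In_map_enum (T : finType) (U : Type) (f : T -> U) (u : U) :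
  In u (List.map f (enum T)) <-> exists x, u = f x.
Proof.
rewrite in_map_iff; split=> [[x [<- _]]|[x ->]]; exists x => //.
by split; last exact: In_enum.
Qed.

Lemma lt_size_onth (T : Type) (s : seq T) i : i < size s -> exists x, onth s i = Some x.
Proof. by rewrite -onthTE; case: onth => // x _; exists x. Qed.

Lemma predk0 p : 0 < p -> predk 0 p = p.
Proof. rewrite /predk; lia. Qed.

Lemma predk1S p : 0 < p -> predk 1 p.+1 = p.
Proof. rewrite /predk; lia. Qed.

Section SpaceTime.
Variables (Sigma : finType) (A : IA Sigma) (w : seq Sigma).
Local Notation n := (size w).
Local Notation conf := (ia_conf A w).
Local Notation sharp := (ia_sharp A).
Local Notation lambda := (ia_lambda A).

Lemma conf_init c : 0 < c <= n -> conf 0 c = lambda.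
Proof. by move=> /= ->. Qed.

Lemma conf_init_next (b : bool) c : 0 < c <= n ->
  (if b then c = n else c <> n) -> conf 0 c.+1 = if b then sharp else lambda.
Proof. by move=> hc /=; case: b; case: ifP => //; lia. Qed.

Lemma conf_input t s : onth w t = Some s ->
  conf t.+1 1 = ia_delta_in s sharp (conf t 1) (conf t 2).
Proof.
move=> hs; have lt_tn : t < n by rewrite -onthTE hs.
by rewrite /= hs ifT; [case: t {hs lt_tn}|lia].
Qed.

Lemma conf_inner t c : 1 < c <= n ->
  conf t.+1 c = ia_delta (conf t c.-1) (conf t c) (conf t c.+1).
Proof.
move=> hc /=; have -> : (c == 1) = false by lia.
by rewrite ifT //; lia.
Qed.

Definition diagram (x y : nat) : ia_Q A := conf y (x - y + 1).

Lemma diagram_first_input s : onth w 0 = Some s ->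
  diagram 1 1 = ia_delta_in s sharp lambda (conf 0 2).
Proof.
move=> hs; have n_gt0 : 0 < n by rewrite -onthTE hs.
by rewrite /diagram (conf_input hs) conf_init //; lia.
Qed.

Lemma diagram_first x : 1 < x <= n ->
  diagram x 1 = ia_delta lambda lambda (conf 0 x.+1).
Proof.
move=> hx; rewrite /diagram subn1 addn1 prednK; last lia.
by rewrite conf_inner ?(conf_init (c := x.-1)) ?(conf_init (c := x)) //; lia.
Qed.

Lemma diagram_input x s : 1 < x <= n -> onth w x.-1 = Some s ->
  diagram x x = ia_delta_in s sharp
    (diagram (predk 1 x) (predk 1 x)) (diagram x (predk 1 x)).
Proof.
case: x => // x hx /= hs; rewrite predk1S; last lia.
by rewrite /diagram subnn (conf_input hs); do 2 f_equal; lia.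
Qed.

Lemma diagram_inner x y : 1 < y -> y < x <= n ->
  diagram x y = ia_delta (diagram (predk 2 x) (predk 1 y))
    (diagram (predk 1 x) (predk 1 y)) (diagram x (predk 1 y)).
Proof.
case: y => // y hy hxy; rewrite predk1S; last lia.
by rewrite /diagram conf_inner; [f_equal; f_equal; rewrite /predk|]; lia.
Qed.

End SpaceTime.

Section Formula.
Variables (Sigma : finType) (A : IA Sigma).
Local Notation Q := (ia_Q A).
Local Notation sharp := (ia_sharp A).
Local Notation lambda := (ia_lambda A).

(* Relation symbol 0 is meant to be x = y and 1 to be y < x; the state q
   gets the symbol state_rel q, meant to hold at (x, y) iff y <= x and the
   diagram carries q there. *)
Definition state_rel (q : Q) : nat := (enum_rank q).+2.

Lemma state_rel_inj : injective state_rel.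
Proof. by move=> p q [] /ord_inj /enum_rank_inj. Qed.

Definition letter_clause (s : Sigma) : clause Sigma :=
  MkClause [:: HLetter s 0] (Some 0).

Definition lt_base_clause : clause Sigma :=
  MkClause [:: HRel Sigma 0 true 1 0; HUn Sigma false Pmin VX 0] (Some 1).

Definition lt_step_clause : clause Sigma :=
  MkClause [:: HRel Sigma 1 true 1 0; HUn Sigma false Pmin VX 0] (Some 1).

Definition first_input_clause (s : Sigma) (b : bool) : clause Sigma :=
  MkClause [:: HLetter s 0; HUn Sigma true Pmin VY 0; HUn Sigma b Pmax VX 0]
    (Some (state_rel (ia_delta_in s sharp lambda (if b then sharp else lambda)))).

Definition first_clause (b : bool) : clause Sigma :=
  MkClause [:: HUn Sigma true Pmin VY 0; HUn Sigma false Pmin VX 0;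
               HUn Sigma b Pmax VX 0]
    (Some (state_rel (ia_delta lambda lambda (if b then sharp else lambda)))).

Definition input_clause (s : Sigma) (m r : Q) : clause Sigma :=
  MkClause [:: HLetter s 0; HUn Sigma false Pmin VY 0;
               HRel Sigma (state_rel m) true 1 1; HRel Sigma (state_rel r) true 0 1]
    (Some (state_rel (ia_delta_in s sharp m r))).

Definition inner_clause (l m r : Q) : clause Sigma :=
  MkClause [:: HUn Sigma false Pmin VY 0; HRel Sigma 1 true 0 0;
               HRel Sigma (state_rel l) true 2 1; HRel Sigma (state_rel m) true 1 1;
               HRel Sigma (state_rel r) true 0 1]
    (Some (state_rel (ia_delta l m r))).

Definition reject_clause (q : Q) : clause Sigma :=
  MkClause [:: HRel Sigma (state_rel q) true 0 0; HUn Sigma true Pmax VX 0;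
               HUn Sigma true Pmax VY 0] None.

Definition Phi : formula Sigma :=
  List.app (List.map letter_clause (enum Sigma))
  (List.app [:: lt_base_clause; lt_step_clause]
  (List.app (List.map (fun p => first_input_clause p.1 p.2) (enum {: Sigma * bool}))
  (List.app (List.map first_clause (enum {: bool}))
  (List.app (List.map (fun p => input_clause p.1.1 p.1.2 p.2) (enum {: Sigma * Q * Q}))
  (List.app (List.map (fun p => inner_clause p.1.1 p.1.2 p.2) (enum {: Q * Q * Q}))
  (List.map (fun q => reject_clause (val q)) (enum {: {q : Q | ~~ ia_accept q}}))))))).

Lemma In_Phi C : In C Phi <->
  (exists s, C = letter_clause s) \/ (C = lt_base_clause \/ C = lt_step_clause) \/
  (exists s b, C = first_input_clause s b) \/ (exists b, C = first_clause b) \/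
  (exists s m r, C = input_clause s m r) \/ (exists l m r, C = inner_clause l m r) \/
  (exists2 q, ~~ ia_accept q & C = reject_clause q).
Proof.
rewrite /Phi !in_app_iff !In_map_enum /=; split.
- case=> [[s ->]|[[<-|[<-|[]]]|[[[s b] ->]|[[b ->]|[[[[s m] r] ->]|[[[[l m] r] ->]|[[q nq] ->]]]]]]].
  + by left; exists s.
  + by right; left; left.
  + by right; left; right.
  + by do 2 right; left; exists s, b.
  + by do 3 right; left; exists b.
  + by do 4 right; left; exists s, m, r.
  + by do 5 right; left; exists l, m, r.
  + by do 6 right; exists q.
- case=> [[s ->]|[[->|->]|[[s [b ->]]|[[b ->]|[[s [m [r ->]]]|[[l [m [r ->]]]|[q nq ->]]]]]]].
  + by left; exists s.
  + by right; left; left.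
  + by right; left; right; left.
  + by do 2 right; left; exists (s, b).
  + by do 3 right; left; exists b.
  + by do 4 right; left; exists (s, m, r).
  + by do 5 right; left; exists (l, m, r).
  + by do 6 right; exists (exist _ q nq).
Qed.

End Formula.

Section Soundness.
Variables (Sigma : finType) (A : IA Sigma) (w : seq Sigma).
Local Notation n := (size w).

Definition diagram_model (r x y : nat) : Prop :=
  [\/ r = 0 /\ x = y, r = 1 /\ y < x | y <= x /\ r = state_rel (diagram A w x y)].

Lemma diagram_model_diag x y : diagram_model 0 x y <-> x = y.
Proof. by split=> [[[_ ->]|[]|[_]]|->] //; apply: Or31. Qed.

Lemma diagram_model_lt x y : diagram_model 1 x y <-> y < x.
Proof. by split=> [[[]|[]|[_]]|lt_yx] //; apply: Or32. Qed.

Lemma diagram_model_state q x y :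
  diagram_model (state_rel q) x y <-> y <= x /\ q = diagram A w x y.
Proof. by split=> [[[]|[]|[? /state_rel_inj]]|[? ->]] //; apply: Or33. Qed.

Section Clauses.
Variables x y : nat.
Hypotheses (x_gt0 : 0 < x) (x_le_n : x <= n) (y_gt0 : 0 < y) (y_le_n : y <= n).

Lemma letter_clause_sound s : clause_holds w diagram_model x y (letter_clause s).
Proof. by move=> /In_allP /= [[_ ->] _]; apply/diagram_model_diag. Qed.

Lemma lt_base_clause_sound : clause_holds w diagram_model x y (lt_base_clause Sigma).
Proof.
move=> /In_allP /=; rewrite !predk0 // => -[/diagram_model_diag <- [x_neq1 _]].
by apply/diagram_model_lt; rewrite /predk; lia.
Qed.

Lemma lt_step_clause_sound : clause_holds w diagram_model x y (lt_step_clause Sigma).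
Proof.
move=> /In_allP /=; rewrite !predk0 // => -[/diagram_model_lt lt_y [x_neq1 _]].
by apply/diagram_model_lt; move: lt_y; rewrite /predk; lia.
Qed.

Lemma first_input_clause_sound s b :
  clause_holds w diagram_model x y (first_input_clause A s b).
Proof.
move=> /In_allP /=; rewrite !predk0 // => -[[hs <-] [x1 [hb _]]]; subst x.
apply/diagram_model_state; split=> //.
by rewrite (diagram_first_input A hs) (conf_init_next A _ hb).
Qed.

Lemma first_clause_sound b : clause_holds w diagram_model x y (first_clause A b).
Proof.
move=> /In_allP /=; rewrite !predk0 // => -[y1 [x_neq1 [hb _]]]; subst y.
apply/diagram_model_state; split=> //.
by rewrite diagram_first ?(conf_init_next A _ hb) //; lia.
Qed.

Lemma input_clause_sound s (m r : ia_Q A) :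
  clause_holds w diagram_model x y (input_clause s m r).
Proof.
move=> /In_allP /=; rewrite !predk0 //.
move=> -[[hs <-] [x_neq1 [/diagram_model_state [_ ->] [/diagram_model_state [_ ->] _]]]].
apply/diagram_model_state; split=> //.
by rewrite (diagram_input A _ hs) //; lia.
Qed.

Lemma inner_clause_sound (l m r : ia_Q A) :
  clause_holds w diagram_model x y (inner_clause l m r).
Proof.
move=> /In_allP /=; rewrite !predk0 //.
move=> -[y_neq1 [/diagram_model_lt lt_yx [/diagram_model_state [_ ->]
          [/diagram_model_state [_ ->] [/diagram_model_state [_ ->] _]]]]].
apply/diagram_model_state; split; first lia.
by rewrite [RHS]diagram_inner //; lia.
Qed.

Lemma reject_clause_sound (q : ia_Q A) : ~~ ia_accept q -> ia_accepts A w ->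
  clause_holds w diagram_model x y (reject_clause q).
Proof.
move=> rej acc /In_allP /=; rewrite !predk0 //.
move=> -[/diagram_model_state [_ eq_q] [x_eq_n [y_eq_n _]]].
by move: rej; rewrite eq_q x_eq_n y_eq_n /diagram subnn => /negP.
Qed.

End Clauses.

Lemma diagram_model_sat x y C : ia_accepts A w ->
  0 < x <= n -> 0 < y <= n -> In C (Phi A) -> clause_holds w diagram_model x y C.
Proof.
move=> acc /andP [? ?] /andP [? ?] /In_Phi.
case=> [[s ->]|[[->|->]|[[s [b ->]]|[[b ->]|[[s [m [r ->]]]|[[l [m [r ->]]]|[q rej ->]]]]]]].
- exact: letter_clause_sound.
- exact: lt_base_clause_sound.
- exact: lt_step_clause_sound.
- exact: first_input_clause_sound.
- exact: first_clause_sound.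
- exact: input_clause_sound.
- exact: inner_clause_sound.
- exact: reject_clause_sound.
Qed.

Lemma accepts_models : ia_accepts A w -> models w (Phi A).
Proof. by move=> acc; exists diagram_model => x y hx hy C; apply: diagram_model_sat. Qed.

End Soundness.

Section Completeness.
Variables (Sigma : finType) (A : IA Sigma) (w : seq Sigma).
Variable I : nat -> nat -> nat -> Prop.
Local Notation n := (size w).
Hypothesis I_sat : forall x y, 1 <= x <= n -> 1 <= y <= n ->
  forall C, In C (Phi A) -> clause_holds w I x y C.

Lemma derive C r x y : In C (Phi A) -> cl_concl C = Some r ->
  0 < x <= n -> 0 < y <= n ->
  foldr (fun h P => hyp_holds w I x y h /\ P) True (cl_hyps C) -> I r x y.
Proof.
move=> inC concl hx hy /In_allP hyps.
by have := I_sat hx hy inC hyps; rewrite concl.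
Qed.

Lemma diag_derived x : 0 < x <= n -> I 0 x x.
Proof.
move=> hx; have [s hs] := @lt_size_onth _ w x.-1 ltac:(lia).
apply: (@derive (letter_clause s)) => //=; last by rewrite predk0 //; lia.
by apply/In_Phi; left; exists s.
Qed.

Lemma lt_derived y x : 0 < y -> y < x <= n -> I 1 x y.
Proof.
move=> y_gt0; elim: x => [|x IH] hx; first lia.
have x_gt0 : 0 < x by lia.
case: (ltngtP y x) => [lt_yx|gt_yx|<-]; [|lia|].
- apply: (@derive (lt_step_clause Sigma)) => //=; try lia.
    by apply/In_Phi; right; left; right.
  by rewrite predk1S // !predk0 //; do !split; [apply: IH|]; lia.
- apply: (@derive (lt_base_clause Sigma)) => //=; try lia.
    by apply/In_Phi; right; left; left.
  by rewrite predk1S // !predk0 //; do !split; [apply: diag_derived|]; lia.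
Qed.

Lemma first_row_derived x : 0 < x <= n -> I (state_rel (diagram A w x 1)) x 1.
Proof.
move=> hx; have x_gt0 : 0 < x by case/andP: hx.
have last_x : if x == n then x = n else x <> n by case: eqP.
case: (ltngtP x 1) => [|lt_1x|x1]; first lia.
- rewrite diagram_first ?(conf_init_next A hx last_x); last lia.
  apply: (@derive (first_clause A (x == n))) => //=; try lia.
    by apply/In_Phi; do 3 right; left; exists (x == n).
  by rewrite !predk0 //; do !split; [lia|exact: last_x].
- subst x; have [s hs] := @lt_size_onth _ w 0 ltac:(lia).
  rewrite (diagram_first_input A hs) (conf_init_next A hx last_x).
  apply: (@derive (first_input_clause A s (1 == n))) => //=; try lia.
  by apply/In_Phi; do 2 right; left; exists s, (1 == n).
Qed.

Lemma state_derived y : 0 < y <= n ->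
  forall x, y <= x <= n -> I (state_rel (diagram A w x y)) x y.
Proof.
elim: y => [|y IH] hy x hx; first lia.
case: (posnP y) => [->|y_gt0]; first by apply: first_row_derived; lia.
have {}IH := IH ltac:(lia).
case: (ltngtP y.+1 x) => [lt_yx|gt_yx|<-]; [|lia|].
- rewrite diagram_inner //; last lia.
  rewrite predk1S //.
  apply: (@derive (inner_clause (diagram A w (predk 2 x) y)
    (diagram A w (predk 1 x) y) (diagram A w x y))) => //=; try lia.
    by apply/In_Phi; do 5 right; left; do 3 eexists.
  have x_gt0 : 0 < x by lia.
  rewrite !predk0 ?predk1S //; do !split; try lia.
  + by apply: lt_derived; lia.
  + by apply: IH; rewrite /predk; lia.
  + by apply: IH; rewrite /predk; lia.
  + by apply: IH; lia.
- have [s hs] := @lt_size_onth _ w y ltac:(lia).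
  rewrite (@diagram_input _ A w y.+1 s _ hs); last lia.
  rewrite predk1S //.
  apply: (@derive (input_clause s (diagram A w y y) (diagram A w y.+1 y))) => //=; try lia.
    by apply/In_Phi; do 4 right; left; do 3 eexists.
  by rewrite !predk0 ?predk1S //; do !split; [exact: hs|lia|apply: IH; lia..].
Qed.

Lemma derived_accepts : 0 < n -> ia_accepts A w.
Proof.
move=> n_gt0; suff : ia_accept (diagram A w n n) by rewrite /diagram subnn.
apply/negPn/negP => rej.
have inC : In (reject_clause (diagram A w n n)) (Phi A).
  by apply/In_Phi; do 6 right; apply: (ex_intro2 _ _ (diagram A w n n)) => //; apply/negP.
have n_in : 0 < n <= n by rewrite n_gt0 leqnn.
apply: (I_sat n_in n_in inC).
by apply/In_allP; rewrite /= !predk0 //; do !split; apply: state_derived; lia.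
Qed.

End Completeness.

Theorem lemma5 (Sigma : finType) (A : IA Sigma) :
  exists Phi : formula Sigma,
    forall w : seq Sigma, w <> [::] -> (ia_accepts A w <-> models w Phi).
Proof.
exists (Phi A) => w w_nonempty; split; first exact: accepts_models.
case=> I I_sat; apply: (derived_accepts I_sat).
by rewrite lt0n size_eq0; apply/eqP.
Qed.
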